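(* Let $m\ge1$, $N=2^m$, let $\mathcal{A}\subseteq[0,N-1]$ be nonempty such that the monomial set $\mathcal{I}=\{\mathbf{x}^{\mathrm{bin}(N-1-i)}:i\in\mathcal{A}\}$ is decreasing, and suppose the code $\mathcal{C}_{\boldsymbol{G}_N}(\mathcal{A})$ has minimum distance $2^{m-r}$. Let $\mathbf{P}\in\mathbb{F}_2^{N\times N}$ be upper triangular with unit diagonal. Then the minimum distance of $\mathcal{C}_{\mathbf{P}\boldsymbol{G}_N}(\mathcal{A})$ is also $2^{m-r}$, and the number of codewords of $\mathcal{C}_{\mathbf{P}\boldsymbol{G}_N}(\mathcal{A})$ of Hamming weight $2^{m-r}$ is at least $2^r$.
   Context: $\boldsymbol{G}_N=\begin{pmatrix}1&0\\1&1\end{pmatrix}^{\otimes m}$ over $\mathbb{F}_2$, rows/columns indexed by $0,\dots,N-1$; $\mathcal{C}_{\mathbf{B}}(\mathcal{S})$ is the code spanned by the rows of $\mathbf{B}$ indexed by $\mathcal{S}$. For $i\in[0,N-1]$, $\mathrm{bin}(i)=(i_0,\dots,i_{m-1})$ with $i=\sum_j i_j2^j$, $\mathbf{x}^{b}=\prod_jx_j^{b_j}$; row $i$ of $\boldsymbol{G}_N$ is the evaluation vector of $\mathbf{x}^{\mathrm{bin}(N-1-i)}$ on $\mathbb{F}_2^m$. Order on monomials: $f\preceq_w g$ iff $f\mid g$; for $f=x_{i_1}\cdots x_{i_s}$, $g=x_{j_1}\cdots x_{j_s}$ with $i_1<\dots<i_s$, $j_1<\dots<j_s$, $f\preceq_{sh}g$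 iff $i_\ell\le j_\ell$ for all $\ell$; $f\preceq g$ iff some monomial $g^*$ satisfies $f\preceq_{sh}g^*\preceq_w g$. A set $\mathcal{I}$ of monomials is decreasing if $f\in\mathcal{I}$, $g\preceq f$ imply $g\in\mathcal{I}$. *)

From HB Require Import structures.
From mathcomp Require Import all_boot all_order all_algebra.
Set Implicit Arguments. Unset Strict Implicit. Unset Printing Implicit Defensive.
Import Order.TTheory GRing.Theory.
Local Open Scope ring_scope.

(* The 2x2 kernel [[1,0],[1,1]] over F_2, indexed by a,b in {0,1}. *)
Definition kern2 (a b : nat) : 'F_2 := if (a == 0%N) && (b == 1%N) then 0 else 1.

(* Entries of the m-fold Kronecker power  K^{(x) m}, with K^{(x) (m+1)} = K (x) K^{(x) m}:
   (A (x) B)(i,j) = A(i div n, j div n) * B(i mod n, j mod n), n = size of B. *)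
Fixpoint kron_pow_entry (m i j : nat) : 'F_2 :=
  match m with
  | 0%N => 1
  | m'.+1 => kern2 (i %/ 2 ^ m') (j %/ 2 ^ m') *
             kron_pow_entry m' (i %% 2 ^ m') (j %% 2 ^ m')
  end.

Definition GN (m : nat) : 'M['F_2]_(2 ^ m) :=
  \matrix_(i, j) kron_pow_entry m i j.

Definition row_code (n : nat) (B : 'M['F_2]_n) (S : {set 'I_n}) : {set 'rV['F_2]_n} :=
  [set c | [exists u : {ffun 'I_n -> 'F_2}, c == \sum_(i in S) u i *: row i B]].

Definition wt (n : nat) (c : 'rV['F_2]_n) : nat := #|[set j : 'I_n | c 0 j != 0]|.

Definition has_min_dist (n : nat) (C : {set 'rV['F_2]_n}) (d : nat) : Prop :=
  (exists2 c, c \in C & (c != 0) && (wt c == d)) /\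
  (forall c, c \in C -> c != 0 -> (d <= wt c)%N).

(* Monomials in x_0..x_{m-1} over F_2 (exponents in {0,1}) are represented
   by their support: x^b  <->  {k | b_k = 1}. *)
Definition monomial (m : nat) := {set 'I_m}.

(* x^{bin(N-1-i)}: the set of positions k with bit k of N-1-i equal to 1. *)
Definition mono_of_index (m : nat) (i : 'I_(2 ^ m)) : monomial m :=
  [set k : 'I_m | odd ((2 ^ m - 1 - i) %/ 2 ^ k)].

Definition vars (m : nat) (f : monomial m) : seq nat := map val (enum f).

(* f <=_w g  iff  f | g *)
Definition le_w (m : nat) (f g : monomial m) : bool := f \subset g.

Definition le_sh (m : nat) (f g : monomial m) : bool :=
  (#|f| == #|g|) &&
  [forall l : 'I_m, (l < #|f|)%N ==> (nth 0%N (vars f) l <= nth 0%N (vars g) l)%N].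

Definition mono_le (m : nat) (f g : monomial m) : Prop :=
  exists gs : monomial m, le_sh f gs && le_w gs g.

Definition decreasing (m : nat) (I : {set monomial m}) : Prop :=
  forall f g : monomial m, f \in I -> mono_le g f -> g \in I.

Definition upper_unitriangular (n : nat) (P : 'M['F_2]_n) : Prop :=
  (forall i j : 'I_n, (j < i)%N -> P i j = 0) /\ (forall i : 'I_n, P i i = 1).

(* In block form G_(2N) = [[G_N, 0], [G_N, G_N]], so by induction on m, adding to row i
   of G_N any combination of later rows never lowers its weight 2^popcount(i).  Since P is
   upper unitriangular, every nonzero codeword of C_(P G_N)(A) is row i of G_N plus later
   rows, where i is the first index of A used; hence the minimum distance 2^(m-r) cannot
   drop.  A row i0 of G_N of that weight lies in A and its monomial has degree r; by
   decreasingness x_0...x_(r-1) and all its divisors, i.e. the monomials of all indices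
   >= N - 2^r, belong to the monomial set.  Row N - 2^r + t of P G_N is the 2^r-periodic
   repetition of row t of Q G_(2^r), where Q is the bottom-right 2^r x 2^r block of P; as
   Q G_(2^r) is invertible, the code contains every 2^r-periodic word, in particular the
   2^r indicators of the residue classes modulo 2^r, each of weight 2^(m-r). *)

From mathcomp Require Import all_boot all_order all_algebra.
From mathcomp Require Import zify.
Set Implicit Arguments. Unset Strict Implicit. Unset Printing Implicit Defensive.
Import GRing.Theory.

Local Notation E := kron_pow_entry.

(** * Binary digits *)

Definition popcount (m i : nat) : nat := count (fun k => odd (i %/ 2 ^ k)) (iota 0 m).

Lemma odd_modn_exp_div m k x : k < m -> odd (x %% 2 ^ m %/ 2 ^ k) = odd (x %/ 2 ^ k).
Proof.
move=> km; rewrite -(subnK (ltnW km)) expnD -modn_divl odd_mod //.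
by rewrite oddX subn_eq0 leqNgt km.
Qed.

Lemma popcount_modn m i : popcount m (i %% 2 ^ m) = popcount m i.
Proof.
apply: eq_in_count => k; rewrite mem_iota add0n => km.
exact: odd_modn_exp_div.
Qed.

Lemma popcountS m i : popcount m.+1 i = popcount m i + odd (i %/ 2 ^ m).
Proof. by rewrite /popcount -[m.+1]addn1 iotaD count_cat /= add0n addn0. Qed.

Lemma odd_div_complement m i k : i < 2 ^ m -> k < m ->
  odd ((2 ^ m - 1 - i) %/ 2 ^ k) = ~~ odd (i %/ 2 ^ k).
Proof.
elim: m i k => [|m IH] i [|k] im km //.
  by rewrite !divn1 -subnDA oddB ?oddX // addnC; lia.
rewrite [2 ^ k.+1]expnS !divnMA expnS in im *.
have -> : (2 * 2 ^ m - 1 - i) %/ 2 = 2 ^ m - 1 - i %/ 2 by lia.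
by apply: IH; lia.
Qed.

Lemma bits_inj m x y : x < 2 ^ m -> y < 2 ^ m ->
  (forall k, k < m -> odd (x %/ 2 ^ k) = odd (y %/ 2 ^ k)) -> x = y.
Proof.
elim: m x y => [|m IH] x y xm ym xy; first by rewrite expn0 in xm ym; lia.
have x2y2 : x %/ 2 = y %/ 2.
  rewrite expnS in xm ym; apply: IH; [lia | lia | move=> k km].
  by rewrite -!divnMA -expnS xy.
have := xy 0 isT; rewrite !divn1 => x0y0.
by rewrite (divn_eq x 2) (divn_eq y 2) !modn2 x2y2 x0y0.
Qed.

Lemma count_modn_iota d a q : a < d -> count (fun k => k %% d == a) (iota 0 (q * d)) = q.
Proof.
move=> ad; elim: q => [//|q IH].
rewrite mulSnr iotaD count_cat IH add0n -[q * d]addn0 iotaDl count_map.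
rewrite (@eq_in_count _ _ (pred1 a)); last first.
  by move=> k; rewrite mem_iota add0n => kd /=; rewrite modnMDl modn_small.
by rewrite (count_uniq_mem _ (iota_uniq 0 d)) mem_iota ad addn1.
Qed.

Lemma card_ord_pred m (p : pred nat) : #|[set k : 'I_m | p k]| = count p (iota 0 m).
Proof. by rewrite -val_enum_ord count_map enumT cardsE cardE /enum_mem size_filter. Qed.

(** * Monomials of row indices *)

Definition prefix_monomial (m r : nat) : monomial m := [set k : 'I_m | k < r].

Lemma mono_of_index_card m (i : 'I_(2 ^ m)) : #|mono_of_index i| = m - popcount m i.
Proof.
rewrite (card_ord_pred m (fun k => odd ((2 ^ m - 1 - i) %/ 2 ^ k))).
rewrite (@eq_in_count _ _ (predC (fun k => odd (i %/ 2 ^ k)))) => [|k]; last first.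
  by rewrite mem_iota => /andP[_ km]; exact: odd_div_complement.
by rewrite -[X in X - _](size_iota 0) -(count_predC (fun k => odd (i %/ 2 ^ k))) addKn.
Qed.

Lemma mono_of_index_inj m : injective (@mono_of_index m).
Proof.
move=> i j eq_ij; apply/val_inj/(@bits_inj m) => [||k km]; rewrite ?ltn_ord //.
have := congr1 (fun S : {set 'I_m} => Ordinal km \in S) eq_ij; rewrite !inE /=.
by rewrite !odd_div_complement // => /negb_inj.
Qed.

Lemma mono_of_index_sub_prefix m r (j : 'I_(2 ^ m)) :
  2 ^ m - 2 ^ r <= j -> mono_of_index j \subset prefix_monomial m r.
Proof.
move=> jr; apply/subsetP => k; rewrite !inE; case: ltnP => // rk.
have := leq_pexp2l (isT : 0 < 2) rk; have := ltn_ord j.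
by move=> jm rk2; rewrite divn_small //; lia.
Qed.

Lemma mono_of_index_prefix m r (j : 'I_(2 ^ m)) :
  r <= m -> val j = 2 ^ m - 2 ^ r -> mono_of_index j = prefix_monomial m r.
Proof.
move=> rm jE; have rm2 := leq_pexp2l (isT : 0 < 2) rm.
apply/eqP; rewrite eqEsubset mono_of_index_sub_prefix ?jE //.
apply/subsetP => k; rewrite !inE => kr.
have -> : 2 ^ m - 1 - j = 2 ^ r - 1 - 0 by rewrite jE; have := expn_gt0 2 r; lia.
by rewrite odd_div_complement ?expn_gt0 ?div0n.
Qed.

Lemma vars_sorted m (S : monomial m) : sorted ltn (vars S).
Proof.
rewrite /vars /enum_mem -enumT; apply: (subseq_sorted ltn_trans _ (iota_ltn_sorted 0 m)).
by rewrite -val_enum_ord map_subseq ?filter_subseq.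
Qed.

Lemma vars_prefix m r : r <= m -> vars (prefix_monomial m r) = iota 0 r.
Proof.
move=> rm; rewrite /vars /enum_mem -enumT -(filter_iota_ltn 0 rm) -val_enum_ord filter_map.
by congr map; apply: eq_in_filter => k _; rewrite /= inE.
Qed.

Lemma card_prefix_monomial m r : r <= m -> #|prefix_monomial m r| = r.
Proof. by move=> rm; rewrite cardE -(size_map val) -/(vars _) vars_prefix // size_iota. Qed.

Lemma sorted_ltn_nth_geq s l : sorted ltn s -> l < size s -> l <= nth 0 s l.
Proof.
move=> s_sorted; elim: l => [//|l IH] ls; apply: leq_ltn_trans (IH (ltnW ls)) _.
by apply: (sorted_ltn_nth ltn_trans) => //; rewrite inE ltnW.
Qed.

Lemma le_sh_refl m (f : monomial m) : le_sh f f.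
Proof. by rewrite /le_sh eqxx; apply/forallP => l; apply/implyP => _. Qed.

Lemma le_sh_prefix m (S : monomial m) : le_sh (prefix_monomial m #|S|) S.
Proof.
have Sm : #|S| <= m by rewrite -[leqRHS]card_ord max_card.
rewrite /le_sh card_prefix_monomial // eqxx; apply/forallP => l; apply/implyP => lS.
rewrite vars_prefix // nth_iota // add0n sorted_ltn_nth_geq ?vars_sorted //.
by rewrite size_map -cardE.
Qed.

Lemma decreasing_tail_mem m (A : {set 'I_(2 ^ m)}) (i : 'I_(2 ^ m)) :
  decreasing [set mono_of_index i | i in A] -> i \in A ->
  forall j : 'I_(2 ^ m), 2 ^ m - 2 ^ #|mono_of_index i| <= j -> j \in A.
Proof.
move=> decA iA j jr.
have rm : #|mono_of_index i| <= m by rewrite -[leqRHS]card_ord max_card.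
have memA k : mono_of_index k \in [set mono_of_index i | i in A] -> k \in A.
  by case/imsetP => k' k'A /mono_of_index_inj ->.
have s0m : 2 ^ m - 2 ^ #|mono_of_index i| < 2 ^ m.
  by rewrite -subn_gt0 subKn ?expn_gt0 ?leq_pexp2l.
have prefixI : prefix_monomial m #|mono_of_index i| \in [set mono_of_index i | i in A].
  rewrite -(@mono_of_index_prefix _ _ (Ordinal s0m) rm) //; apply/imset_f/memA.
  apply: (decA (mono_of_index i)); first exact: imset_f.
  exists (mono_of_index i).
  by rewrite (@mono_of_index_prefix _ _ (Ordinal s0m) rm) // le_sh_prefix /le_w subxx.
apply/memA/(decA _ _ prefixI); exists (mono_of_index j).
by rewrite le_sh_refl /le_w mono_of_index_sub_prefix.
Qed.

(** * Rows of the Kronecker power G_N *)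

(* The block form G_(2^(m+1)) = [[G_(2^m), 0], [G_(2^m), G_(2^m)]]. *)
Lemma kron_pow_entry_lo m i k : k < 2 ^ m -> E m.+1 i k = E m (i %% 2 ^ m) k.
Proof. by move=> km /=; rewrite (divn_small km) (modn_small km) /kern2 andbF mul1r. Qed.

Lemma kron_pow_entry_hi m i k : k < 2 ^ m ->
  E m.+1 i (2 ^ m + k) = if i < 2 ^ m then 0%R else E m (i %% 2 ^ m) k.
Proof.
move=> km /=; rewrite divnDl // divnn expn_gt0 (divn_small km) modnDl (modn_small km).
rewrite /kern2 addn0 /= andbT; case: ltnP => [/divn_small -> | mi]; first by rewrite mul0r.
by rewrite eqn0Ngt divn_gt0 ?expn_gt0 // mi mul1r.
Qed.

Lemma kron_pow_entry_diag m i : E m i i = 1%R.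
Proof. by elim: m i => [|m IH] i //=; rewrite IH mulr1 /kern2; case: eqP => // ->. Qed.

Lemma kron_pow_entry_upper m i j : i < j < 2 ^ m -> E m i j = 0%R.
Proof.
elim: m i j => [|m IH] i j /andP[ij jm]; first by rewrite expn0 in jm; lia.
have [jlo | jhi] := ltnP j (2 ^ m).
  by rewrite kron_pow_entry_lo // modn_small ?IH ?ij //; lia.
rewrite -(subnKC jhi) kron_pow_entry_hi; last by rewrite expnS in jm; lia.
case: ltnP => // mi; rewrite IH //; rewrite expnS in jm.
rewrite -[X in (X %% _)](subnKC mi) modnDl modn_small; lia.
Qed.

Lemma kron_pow_entry_tail m r t k : r <= m -> t < 2 ^ r -> k < 2 ^ m ->
  E m (2 ^ m - 2 ^ r + t) k = E r t (k %% 2 ^ r).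
Proof.
elim: m k => [|m IH] k rm tr km; first by move: rm; rewrite leqn0 => /eqP ->.
have [-> | rlt] : r = m.+1 \/ r <= m by lia.
  by rewrite subnn (modn_small km).
have rm2 : 2 ^ r <= 2 ^ m by rewrite leq_pexp2l.
have sm : 2 ^ m - 2 ^ r + t < 2 ^ m by lia.
rewrite expnS in km; rewrite expnS mul2n -addnn -addnBA // -addnA.
have [klo | khi] := ltnP k (2 ^ m).
  by rewrite kron_pow_entry_lo // modnDl (modn_small sm) IH.
rewrite -(subnKC khi) kron_pow_entry_hi; last by lia.
rewrite ltnNge leq_addr /= modnDl (modn_small sm) IH //; last by lia.
by move: (k - 2 ^ m) => x; rewrite -(subnK rlt) expnD modnMDl.
Qed.

(* Words are functions on nat, so that a word of length 2^(m+1) splits into two halves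
   of length 2^m without casts between ordinal types. *)
Definition weight (R : nmodType) (n : nat) (f : nat -> R) : nat :=
  count (fun k => f k != 0%R) (iota 0 n).

Section Weight.
Variable R : nmodType.
Implicit Types f g : nat -> R.

Lemma eq_weight n f g : (forall k, k < n -> f k = g k) -> weight n f = weight n g.
Proof. by move=> fg; apply: eq_in_count => k; rewrite mem_iota => /andP[_ /fg ->]. Qed.

Lemma weight_addn n1 n2 f :
  weight (n1 + n2) f = weight n1 f + weight n2 (fun k => f (n1 + k)).
Proof. by rewrite /weight iotaD count_cat add0n -[n1]addn0 iotaDl count_map addn0. Qed.

Lemma weight0 n : weight n (fun=> 0%R : R) = 0.
Proof. by rewrite /weight eqxx count_pred0. Qed.

Lemma leq_weight_addr n f g : weight n f <= weight n (fun k => f k + g k)%R + weight n g.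
Proof.
rewrite /weight -count_predUI; apply: leq_trans (leq_addr _ _) => /=.
apply: sub_count => k /= fk.
by case: (eqVneq (g k) 0%R) => [-> | gk]; rewrite ?addr0 ?fk ?gk ?orbT.
Qed.

End Weight.

Definition kron_comb m (w : nat -> 'F_2) (k : nat) : 'F_2 :=
  (\sum_(j < 2 ^ m) w j * E m j k)%R.

Lemma kron_combD m w1 w2 k :
  kron_comb m (fun j => w1 j + w2 j)%R k = (kron_comb m w1 k + kron_comb m w2 k)%R.
Proof. by rewrite /kron_comb -big_split; apply: eq_bigr => j _; rewrite mulrDl. Qed.

Lemma kron_comb_lo m w k : k < 2 ^ m ->
  kron_comb m.+1 w k = kron_comb m (fun j => w j + w (2 ^ m + j)%N)%R k.
Proof.
move=> km; rewrite /kron_comb; under eq_bigr do rewrite kron_pow_entry_lo //.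
rewrite [2 ^ m.+1]expnS mul2n -addnn big_split_ord /= -big_split /=.
by apply: eq_bigr => j _; rewrite modnDl modn_small // mulrDl.
Qed.

Lemma kron_comb_hi m w k : k < 2 ^ m ->
  kron_comb m.+1 w (2 ^ m + k) = kron_comb m (fun j => w (2 ^ m + j)) k.
Proof.
move=> km; rewrite /kron_comb; under eq_bigr do rewrite kron_pow_entry_hi //.
rewrite [2 ^ m.+1]expnS mul2n -addnn big_split_ord /=.
rewrite big1 ?add0r => [|j _]; last by rewrite ltn_ord mulr0.
by apply: eq_bigr => j _; rewrite ltnNge leq_addr /= modnDl modn_small.
Qed.

Lemma weight_kron_row m i : i < 2 ^ m -> weight (2 ^ m) (E m i) = 2 ^ popcount m i.
Proof.
elim: m i => [|m IH] i im; first by [].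
rewrite [2 ^ m.+1]expnS mul2n -addnn weight_addn in im *.
rewrite (eq_weight (kron_pow_entry_lo i)) popcountS -popcount_modn.
have [mi | mi] := ltnP i (2 ^ m).
  rewrite [X in _ + X](eq_weight (g := fun=> 0%R)) => [|k km]; last first.
    by rewrite kron_pow_entry_hi // mi.
  by rewrite weight0 IH ?ltn_pmod ?expn_gt0 // (divn_small mi) !addn0.
rewrite [X in _ + X](eq_weight (g := E m (i %% 2 ^ m))) => [|k km]; last first.
  by rewrite kron_pow_entry_hi // ltnNge mi.
have -> : i %/ 2 ^ m = 1.
  by apply/eqP; rewrite eqn_leq -ltnS ltn_divLR ?divn_gt0 ?expn_gt0 // mi andbT; lia.
by rewrite IH ?ltn_pmod ?expn_gt0 // addn1 expnS mul2n -addnn.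
Qed.

(* If i lies in the top block, the left half of the combination is the combination of the
   top rows plus the right half, so the triangle inequality applies; otherwise both halves
   are the same combination of rows >= i - 2^m. *)
Lemma weight_kron_row_le_comb m i (w : nat -> 'F_2) :
  i < 2 ^ m -> (forall j, j < i -> w j = 0%R) -> w i = 1%R ->
  weight (2 ^ m) (E m i) <= weight (2 ^ m) (kron_comb m w).
Proof.
elim: m i w => [|m IH] i w im w0 w1.
  rewrite expn0 ltnS leqn0 in im; rewrite (eqP im) in w1 *.
  by apply/eq_leq/eq_weight => k _; rewrite /kron_comb big_ord1 w1 mul1r.
rewrite [2 ^ m.+1]expnS mul2n -addnn !weight_addn in im *.
rewrite (eq_weight (kron_pow_entry_lo i)) (eq_weight (kron_pow_entry_hi i)).
rewrite (eq_weight (kron_comb_lo w)) (eq_weight (kron_comb_hi w)).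
have [ilo | ihi] := ltnP i (2 ^ m).
  rewrite weight0 addn0 modn_small //; apply: leq_trans (IH i w ilo w0 w1) _.
  apply: leq_trans (leq_weight_addr _ _ (kron_comb m (fun j => w (2 ^ m + j)))) _.
  by rewrite (eq_weight (fun k _ => esym (kron_combD _ _ _ k))).
set w' := fun j => w (2 ^ m + j).
have w'E : forall k, kron_comb m (fun j => w j + w' j)%R k = kron_comb m w' k.
  by move=> k; apply: eq_bigr => j _; rewrite w0 ?add0r // (leq_trans (ltn_ord j)).
have i'm : i - 2 ^ m < 2 ^ m by lia.
have w'0 j : j < i - 2 ^ m -> w' j = 0%R by move=> ji; apply: w0; lia.
have w'1 : w' (i - 2 ^ m) = 1%R by rewrite /w' subnKC.
rewrite (eq_weight (fun k _ => w'E k)) -{1 2}(subnKC ihi) modnDl (modn_small i'm).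
by rewrite leq_add ?IH.
Qed.

Local Open Scope ring_scope.

(** * Codes spanned by rows *)

Lemma F2_neq0_eq1 (x : 'F_2) : x != 0 -> x = 1.
Proof. by case: x => [[|[|k]]] // hk _; apply: val_inj. Qed.

Lemma F2_natr_neq0 (b : bool) : ((b%:R : 'F_2) != 0) = b.
Proof. by case: b. Qed.

Lemma wt_weight n (c : 'rV['F_2]_n) (f : nat -> 'F_2) :
  (forall k : 'I_n, c 0 k = f k) -> wt c = weight n f.
Proof.
move=> cf; rewrite /wt /weight -(card_ord_pred n (fun k => f k != 0)).
by apply: eq_card => k; rewrite !inE cf.
Qed.

Lemma wt0 n : wt (0 : 'rV['F_2]_n) = 0%N.
Proof. by rewrite (@wt_weight _ _ (fun=> 0)) ?weight0 // => k; rewrite mxE. Qed.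

Lemma row_codeP n (B : 'M['F_2]_n) (S : {set 'I_n}) c :
  reflect (exists2 u : 'rV_n, (forall i, i \notin S -> u 0 i = 0) & c = u *m B)
          (c \in row_code B S).
Proof.
apply: (iffP idP) => [|[u uS ->]]; rewrite inE.
  case/existsP => u /eqP ->; exists (\row_i (if i \in S then u i else 0)).
    by move=> i /negbTE iS; rewrite mxE iS.
  rewrite mulmx_sum_row [LHS]big_mkcond; apply: eq_bigr => i _.
  by rewrite mxE; case: ifP; rewrite ?scale0r.
apply/existsP; exists [ffun i => u 0 i]; apply/eqP.
rewrite mulmx_sum_row [RHS]big_mkcond; apply: eq_bigr => i _; rewrite ffunE.
by case: ifPn => // /uS ->; rewrite scale0r.
Qed.

Lemma row_in_row_code n (B : 'M['F_2]_n) (S : {set 'I_n}) i :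
  i \in S -> row i B \in row_code B S.
Proof.
move=> iS; apply/row_codeP; exists (delta_mx 0 i); last exact: rowE.
by move=> j jS; rewrite mxE eqxx /=; case: eqP jS => // ->; rewrite iS.
Qed.

Lemma wt_row_kron m (i : 'I_(2 ^ m)) : wt (row i (GN m)) = (2 ^ popcount m i)%N.
Proof. by rewrite (@wt_weight _ _ (E m i)) ?weight_kron_row // => k; rewrite !mxE. Qed.

Lemma row_kron_neq0 m (i : 'I_(2 ^ m)) : row i (GN m) != 0.
Proof. by apply/eqP => /rowP/(_ i)/eqP; rewrite !mxE kron_pow_entry_diag oner_eq0. Qed.

Definition leading_one n (v : 'rV['F_2]_n) (i : 'I_n) : Prop :=
  (forall j : 'I_n, (j < i)%N -> v 0 j = 0) /\ v 0 i = 1.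

Lemma leading_one_mulmx n (v : 'rV['F_2]_n) (P : 'M['F_2]_n) i :
  upper_unitriangular P -> leading_one v i -> leading_one (v *m P) i.
Proof.
move=> [Plo Pd] [v0 v1]; have vanish (j l : 'I_n) : (j <= i)%N -> l != i -> v 0 l * P l j = 0.
  move=> ji li; have [/v0 -> | il] := ltnP l i; first by rewrite mul0r.
  by rewrite Plo ?mulr0 // (leq_ltn_trans ji) // ltn_neqAle eq_sym li il.
split=> [j ji|]; rewrite mxE.
  apply: big1 => l _; have [-> | li] := eqVneq l i; first by rewrite Plo ?mulr0.
  exact: vanish (ltnW ji) li.
by rewrite (bigD1 i) //= v1 Pd mulr1 big1 ?addr0 // => l /(vanish i l (leqnn i)).
Qed.

Lemma wt_row_kron_le m (w : 'rV['F_2]_(2 ^ m)) i :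
  leading_one w i -> (wt (row i (GN m)) <= wt (w *m GN m))%N.
Proof.
move=> [w0 w1]; pose wN j := w 0 (insubd i j).
rewrite (@wt_weight _ _ (E m i)) => [|k]; last by rewrite !mxE.
rewrite (@wt_weight _ _ (kron_comb m wN)) => [|k]; last first.
  by rewrite mxE; apply: eq_bigr => j _; rewrite mxE /wN valKd.
apply: weight_kron_row_le_comb; rewrite ?ltn_ord // /wN ?valKd //.
by move=> j ji; rewrite w0 // val_insubd (ltn_trans ji (ltn_ord i)).
Qed.

Lemma wt_row_kron_le_code m (P : 'M['F_2]_(2 ^ m)) (A : {set 'I_(2 ^ m)}) c :
  upper_unitriangular P -> c \in row_code (P *m GN m) A -> c != 0 ->
  exists2 i, i \in A & (wt (row i (GN m)) <= wt c)%N.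
Proof.
move=> uutP /row_codeP[u uA ->]; rewrite mulmxA => c_neq0.
have /existsP[i0 ui0] : [exists i, u 0 i != 0].
  apply: contraNT c_neq0 => /existsPn u0; rewrite (_ : u = 0) ?mul0mx //.
  by apply/rowP => i; rewrite mxE; apply/eqP/negbNE/u0.
case: (@arg_minnP _ i0 (fun i => u 0 i != 0) val ui0) => i ui imin.
have lead : leading_one u i.
  split=> [j ji|]; last exact: F2_neq0_eq1.
  by apply: contraTeq ji => /imin; rewrite -leqNgt.
exists i; last exact/wt_row_kron_le/leading_one_mulmx.
by apply: contraNT ui => /uA ->.
Qed.

(** * Minimum-weight codewords from the last 2^r rows *)

Lemma det_upper_unitriangular n (P : 'M['F_2]_n) : upper_unitriangular P -> \det P = 1.
Proof.
case=> Plo Pd; rewrite -det_tr det_trig; last by apply/is_trig_mxP => i j ij; rewrite mxE Plo.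
by apply: big1 => i _; rewrite mxE Pd.
Qed.

Lemma upper_unitriangular1 n : upper_unitriangular (1%:M : 'M['F_2]_n).
Proof. by split=> [i j ji | i]; rewrite mxE ?eqxx //; case: eqP ji => // ->; rewrite ltnn. Qed.

Lemma upper_unitriangular_trGN m : upper_unitriangular (GN m)^T.
Proof.
split=> [i j ji | i]; rewrite !mxE ?kron_pow_entry_diag //.
by rewrite kron_pow_entry_upper // ji ltn_ord.
Qed.

Section TailCodewords.
Variables (m r : nat) (A : {set 'I_(2 ^ m)}) (P : 'M['F_2]_(2 ^ m)).
Hypotheses (rm : (r <= m)%N) (uutP : upper_unitriangular P)
           (tailA : forall j : 'I_(2 ^ m), (2 ^ m - 2 ^ r <= j)%N -> j \in A).

Let tailE : (2 ^ m - 2 ^ r + 2 ^ r = 2 ^ m)%N.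
Proof. by rewrite subnK // leq_pexp2l. Qed.

Let pow2r_gt0 : (0 < 2 ^ r)%N.
Proof. by rewrite expn_gt0. Qed.

Let tail (t : 'I_(2 ^ r)) : 'I_(2 ^ m) := cast_ord tailE (rshift _ t).
(* [colsub res v] is the 2^r-periodic word repeating v : 'rV_(2^r). *)
Let res (k : 'I_(2 ^ m)) : 'I_(2 ^ r) := Ordinal (ltn_pmod k pow2r_gt0).
Let Q := mxsub tail tail P.

Let sum_tail (F : 'I_(2 ^ m) -> 'F_2) :
  (forall l : 'I_(2 ^ m), (l < 2 ^ m - 2 ^ r)%N -> F l = 0) -> \sum_l F l = \sum_t F (tail t).
Proof.
move=> F0; rewrite (reindex (cast_ord tailE)) /=; last first.
  by exists (cast_ord (esym tailE)) => l _; rewrite ?cast_ordK ?cast_ordKV.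
by rewrite big_split_ord /= big1 ?add0r // => l _; apply: F0; rewrite /= ltn_ord.
Qed.

Lemma rowsub_tail_mulmx_kron : rowsub tail (P *m GN m) = colsub res (Q *m GN r).
Proof.
case: uutP => Plo _; apply/matrixP => t k.
rewrite mxE [LHS]mxE sum_tail => [|l lt]; last first.
  by rewrite Plo ?mul0r // (leq_trans lt) //= leq_addr.
rewrite !mxE; apply: eq_bigr => s _.
by rewrite !mxE /= kron_pow_entry_tail ?ltn_ord.
Qed.

Lemma unitmx_tail_kron : Q *m GN r \in unitmx.
Proof.
have uutQ : upper_unitriangular Q.
  by case: uutP => Plo Pd; split=> [s t ts | s]; rewrite mxE ?Pd // Plo //= ltn_add2l.
rewrite unitmxE det_mulmx (det_upper_unitriangular uutQ) -det_tr.
by rewrite (det_upper_unitriangular (upper_unitriangular_trGN r)) mulr1 unitr1.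
Qed.

Lemma colsub_res_in_code (v : 'rV_(2 ^ r)) : colsub res v \in row_code (P *m GN m) A.
Proof.
rewrite -(mulmxKV unitmx_tail_kron v) -mulmx_colsub -rowsub_tail_mulmx_kron rowsubE.
apply/row_codeP; exists (v *m invmx (Q *m GN r) *m rowsub tail 1%:M); last exact: mulmxA.
move=> i iA; rewrite mxE big1 // => t _; rewrite !mxE.
case: eqP => [tE | _]; last by rewrite mulr0.
by rewrite -tE tailA //= leq_addr in iA.
Qed.

Let res_indicator (a : 'I_(2 ^ r)) : 'rV['F_2]_(2 ^ m) := colsub res (delta_mx 0 a).

Lemma wt_res_indicator a : wt (res_indicator a) = (2 ^ (m - r))%N.
Proof.
rewrite (@wt_weight _ _ (fun k => ((k %% 2 ^ r)%N == a)%:R)) => [|k]; last by rewrite !mxE.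
rewrite /weight (@eq_count _ _ (fun k => k %% 2 ^ r == a)%N) => [|k]; last exact: F2_natr_neq0.
by rewrite -{1}(subnK rm) expnD count_modn_iota.
Qed.

Lemma res_indicator_inj : injective res_indicator.
Proof.
have r2m : (2 ^ r <= 2 ^ m)%N by rewrite leq_pexp2l.
move=> a b /(congr1 (fun c : 'rV_(2 ^ m) => c 0 (widen_ord r2m a))); rewrite !mxE.
have -> : res (widen_ord r2m a) = a by apply/val_inj; rewrite /= modn_small.
by rewrite !eqxx /=; case: eqP => // _ /eqP; rewrite eq_sym oner_eq0.
Qed.

Lemma card_min_wt_tail :
  (2 ^ r <= #|[set c in row_code (P *m GN m) A | wt c == 2 ^ (m - r)]|)%N.
Proof.
rewrite -[X in (X <= _)%N]card_ord -(card_imset _ res_indicator_inj).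
apply/subset_leq_card/subsetP => _ /imsetP[a _ ->].
by rewrite inE colsub_res_in_code wt_res_indicator eqxx.
Qed.

End TailCodewords.

Theorem proposition5 (m r : nat) (A : {set 'I_(2 ^ m)}) (P : 'M['F_2]_(2 ^ m)) :
  (1 <= m)%N ->
  A != set0 ->
  decreasing [set mono_of_index i | i in A] ->
  (r <= m)%N ->
  has_min_dist (row_code (GN m) A) (2 ^ (m - r)) ->
  upper_unitriangular P ->
  has_min_dist (row_code (P *m GN m) A) (2 ^ (m - r)) /\
  (2 ^ r <= #|[set c in row_code (P *m GN m) A | wt c == 2 ^ (m - r)]|)%N.
Proof.
move=> _ _ decA rm [[c0 c0C /andP[c0_neq0 /eqP wt_c0]] min_wt] uutP.
have row_min_wt i : i \in A -> (2 ^ (m - r) <= wt (row i (GN m)))%N.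
  by move=> iA; rewrite min_wt ?row_in_row_code ?row_kron_neq0.
have [i iA wt_i] : exists2 i, i \in A & (wt (row i (GN m)) <= wt c0)%N.
  by apply: (wt_row_kron_le_code (upper_unitriangular1 _)); rewrite ?mul1mx.
have deg_i : #|mono_of_index i| = r.
  have /eqP : wt (row i (GN m)) = (2 ^ (m - r))%N.
    by apply/eqP; rewrite eqn_leq -{1}wt_c0 wt_i row_min_wt.
  by rewrite wt_row_kron eqn_exp2l // mono_of_index_card => /eqP ->; exact: subKn.
have := decreasing_tail_mem decA iA; rewrite deg_i => /(card_min_wt_tail rm uutP) card_min.
split=> //; split=> [|c cC c_neq0].
  have /card_gt0P[c] : (0 < #|[set c in row_code (P *m GN m) A | wt c == 2 ^ (m - r)]|)%N.
    by apply: leq_trans card_min; rewrite expn_gt0.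
  rewrite inE => /andP[cC /eqP wt_c]; exists c => //; rewrite wt_c eqxx andbT.
  by apply/eqP => c_eq0; move: wt_c; rewrite c_eq0 wt0 => /eqP; rewrite eq_sym expn_eq0.
have [j jA wt_j] := wt_row_kron_le_code uutP cC c_neq0.
exact: leq_trans (row_min_wt j jA) wt_j.
Qed.
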